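(* Let $G$ be a layered ADT network with source $S$ in layer $1$, in which every supernode has exactly $n$ input ports and $n$ output ports. Let $R=\min_{T\in\mathcal T}\mathrm{mincut}(S,T)$. Let $1\le l\le\lambda-1$, and let $W'$ be a regular set consisting of $R$ input ports of supernodes at layer $l+1$. Then there is a regular set $W$ consisting of $R$ output ports of supernodes at layer $l$ such that the $R\times R$ incidence matrix $G_{(W,W')}$ is full rank.
   Context: Layered ADT network. $G$ is a directed acyclic network of supernodes arranged in layers $1,\dots,\lambda$. All links go from output ports of supernodes at layer $l$ to input ports of supernodes at layer $l+1$, and the source $S$ is at layer $1$. Each supernode $V$ has $n$ input ports and $n$ output ports, and symbols lie in a finite field $\mathbb F_q$. An output port sends the same symbol on all its outgoing edges, and an input port receives the $\mathbb F_q$-sum of its incoming symbols. For supernodes $S,T$, $\mathrm{mincut}(S,T)=\min_\Omega\mathrm{rank}(G_\Omega)$, with the minimum over partitions $\Omega\cup\Omega^c$ of the supernodes with $S\in\Omega$ and $T\in\Omega^c$. $G_\Omega$ is the $0$-$1$ incidence matrix of the edges from output ports in $\Omega$ to input ports in $\Omega^c$. $\mathcal T$ is the set of destination supernodes and $R=\min_{T\in\mathcal T}\mathrm{mincut}(S,T)$. Virtual sink and regular sets. Let $W$ be a set of $R$ ports of supernodes in a single layer such that, for each supernode $V$, $W$ contains either a subset of $O(V)$, or a subset of $I(V)$, or no ports of $V$. The virtual sink $T(W)$ is a new supernode, attached as follows. - Each output port in $W$ is connected by one edge to a distinct input port of $T(W)$. - If $W$ contains $p$ input ports of a supernode $V$,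 all input ports of $V$ not in $W$ are disconnected, and the $p$ upper (first) output ports of $V$ are each connected to a distinct input port of $T(W)$. $W$ is called regular if $\mathrm{mincut}(S,T(W))=R$ in the resulting network. For a set $W$ of $R$ output ports at layer $l$ and a set $W'$ of $R$ input ports at layer $l+1$, $G_{(W,W')}$ is the $R\times R$ $0$-$1$ matrix whose $(w',w)$ entry is $1$ iff there is an edge from $w$ to $w'$. Full rank is taken over $\mathbb F_q$. *)

From HB Require Import structures.
From mathcomp Require Import all_boot all_order all_algebra.
Set Implicit Arguments. Unset Strict Implicit. Unset Printing Implicit Defensive.
Import GRing.Theory.
Local Open Scope ring_scope.

(* A port network: supernodes [V], output ports [Po] (owner [oo]),
   input ports [Pi] (owner [oi]), and edges [e p q] from output port [p]
   to input port [q]. *)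

(* G_Omega : 0-1 incidence matrix of the edges from output ports in Omega
   to input ports in Omega^c  (rows = input ports, columns = output ports;
   rows/columns of ports not concerned are zero, which does not change the rank). *)
Definition cut_matrix (F : fieldType) (V Po Pi : finType) (oo : Po -> V)
  (oi : Pi -> V) (e : Po -> Pi -> bool) (Om : {set V})
  : 'M[F]_(#|{: Pi}|, #|{: Po}|) :=
  \matrix_(i < #|{: Pi}|, j < #|{: Po}|)
     (if [&& oo (enum_val j) \in Om, oi (enum_val i) \notin Om
           & e (enum_val j) (enum_val i)] then 1 else 0).

Definition cut_rank (F : fieldType) (V Po Pi : finType) (oo : Po -> V)
  (oi : Pi -> V) (e : Po -> Pi -> bool) (Om : {set V}) : nat :=
  \rank (cut_matrix F oo oi e Om).

(* mincut(s,t) = min over Omega with s in Omega, t notin Omega of rank G_Omega.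
   (The neutral element #|Pi| is an upper bound of every cut rank.) *)
Definition mincut (F : fieldType) (V Po Pi : finType) (oo : Po -> V)
  (oi : Pi -> V) (e : Po -> Pi -> bool) (s t : V) : nat :=
  \big[minn/#|{: Pi}|]_(Om : {set V} | (s \in Om) && (t \notin Om))
     cut_rank F oo oi e Om.

(* A port of a supernode: [inl (v,i)] = i-th output port of v,
   [inr (v,i)] = i-th input port of v (index 0 = upper/first port). *)
Definition port (V : finType) (n : nat) := ((V * 'I_n) + (V * 'I_n))%type.

Definition port_owner (V : finType) (n : nat) (p : port V n) : V :=
  match p with inl a => a.1 | inr a => a.1 end.

Definition is_out (V : finType) (n : nat) (p : port V n) : bool :=
  if p is inl _ then true else false.
Definition is_in (V : finType) (n : nat) (p : port V n) : bool :=
  if p is inr _ then true else false.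

Definition pedge (V : finType) (n : nat) (edge : V * 'I_n -> V * 'I_n -> bool)
  (a b : port V n) : bool :=
  match a, b with inl p, inr q => edge p q | _, _ => false end.

Definition net_mincut (F : fieldType) (V : finType) (n : nat)
  (edge : V * 'I_n -> V * 'I_n -> bool) (s t : V) : nat :=
  mincut F (@fst V 'I_n) (@fst V 'I_n) edge s t.

Definition net_R (F : fieldType) (V : finType) (n : nat)
  (edge : V * 'I_n -> V * 'I_n -> bool) (S : V) (Tset : {set V}) : nat :=
  \big[minn/#|{: V * 'I_n}|]_(T in Tset) net_mincut F edge S T.

(* Input ports of the augmented network: the old input ports, plus one input
   port of the virtual sink for each element of W. The virtual sink is the
   supernode [None]; the old supernodes are [Some v]. *)
Definition aug_in (V : finType) (n : nat) (W : {set port V n}) :=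
  ((V * 'I_n) + {w : port V n | w \in W})%type.

Definition aug_owner_in (V : finType) (n : nat) (W : {set port V n})
  (q : aug_in W) : option V :=
  match q with inl a => Some a.1 | inr _ => None end.

Definition aug_owner_out (V : finType) (n : nat) (p : V * 'I_n) : option V :=
  Some p.1.

Definition disconnected (V : finType) (n : nat) (W : {set port V n})
  (q : V * 'I_n) : bool :=
  [exists j : 'I_n, inr (q.1, j) \in W] && (inr q \notin W).

(* rank of input port q among the input ports of its supernode lying in W:
   the k-th such input port (k = 0,1,..,p-1) is paired with the k-th upper
   output port of the supernode. *)
Definition in_rank (V : finType) (n : nat) (W : {set port V n})
  (q : V * 'I_n) : nat :=
  #|[set j : 'I_n | (inr (q.1, j) \in W) && (j < q.2)%N]|.

Definition aug_edge (V : finType) (n : nat) (edge : V * 'I_n -> V * 'I_n -> bool)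
  (W : {set port V n}) (p : V * 'I_n) (q : aug_in W) : bool :=
  match q with
  | inl q' => edge p q' && ~~ disconnected W q'
  | inr w =>
      match val w with
      | inl p' => p == p'
      | inr q' => (p.1 == q'.1) && (nat_of_ord p.2 == in_rank W q')
      end
  end.

Definition sink_mincut (F : fieldType) (V : finType) (n : nat)
  (edge : V * 'I_n -> V * 'I_n -> bool) (W : {set port V n}) (S : V) : nat :=
  mincut F (@aug_owner_out V n) (@aug_owner_in V n W) (@aug_edge V n edge W)
    (Some S) None.

Definition sink_set (V : finType) (n : nat) (layer : V -> nat) (R : nat)
  (W : {set port V n}) : Prop :=
  [/\ #|W| = R,
      exists k, forall w, w \in W -> layer (port_owner w) = k
    & forall v : V, ~ ((exists i, inl (v, i) \in W) /\ (exists j, inr (v, j) \in W))].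

Definition regular (F : fieldType) (V : finType) (n : nat) (layer : V -> nat)
  (edge : V * 'I_n -> V * 'I_n -> bool) (S : V) (R : nat) (W : {set port V n})
  : Prop :=
  sink_set layer R W /\ sink_mincut F edge W S = R.

Definition GWW (F : fieldType) (V : finType) (n : nat)
  (edge : V * 'I_n -> V * 'I_n -> bool) (W W' : {set port V n})
  : 'M[F]_(#|W'|, #|W|) :=
  \matrix_(i < #|W'|, j < #|W|)
     (if pedge edge (enum_val j) (enum_val i) then 1 else 0).

From HB Require Import structures.
From mathcomp Require Import all_boot all_order all_algebra.
From mathcomp Require Import zify.
Set Implicit Arguments. Unset Strict Implicit. Unset Printing Implicit Defensive.
Import Order.TTheory GRing.Theory.

(* Let L be the set of output ports of layer l.  Two matroids live on L.  In
   the first, X is independent when a virtual sink fed by X receives |X|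
   symbols from S through the network truncated after layer l: its rank is the
   minimum, over cuts of the truncated network, of the cut rank plus the number
   of ports of X on the source side.  In the second, X is independent when the
   columns of the incidence matrix from X into W' are linearly independent.
   Regularity of W' gives Edmonds' min-max condition R <= r1 X + r2 (L \ X) for
   all X in L: every cut of the truncated network extends to a cut of the
   network with sink T(W') whose rank splits into the truncated cut rank and a
   block of the incidence matrix into W'.  Edmonds' matroid intersection
   theorem then provides a common independent set W of size R, which is
   regular and makes G_(W,W') full rank. *)

(** * Matroid intersection *)

Section MatroidIntersection.
Variable T : finType.
Implicit Types (r : {set T} -> nat) (D W X Y Z : {set T}) (x : T).

Definition rank_function r : Prop :=
  [/\ r set0 = 0,
      forall X Y, X \subset Y -> r X <= r Y,
      forall X x, r (x |: X) <= (r X).+1 &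
      forall X Y, r (X :|: Y) + r (X :&: Y) <= r X + r Y].

Lemma rank_set1_le1 r x : rank_function r -> r [set x] <= 1.
Proof. by case=> r0 _ rU1 _; have := rU1 set0 x; rewrite setU0 r0. Qed.

Lemma rank_setU1_loop r x X : rank_function r -> r [set x] = 0 -> r (x |: X) <= r X.
Proof.
case=> r0 rS _ rsub rx0; have := rsub [set x] X; rewrite rx0.
by have := rS set0 ([set x] :&: X) (sub0set _); rewrite r0; lia.
Qed.

(* Contraction of [x]: the [.-1] removes the rank of [x], so this is only
   meaningful when [r [set x] = 1]. *)
Definition contract r x Z := (r (x |: Z)).-1.

Lemma rank_function_contract r x :
  rank_function r -> r [set x] = 1 -> rank_function (contract r x).
Proof.
move=> [r0 rS rU1 rsub] rx1; rewrite /contract.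
have ge1 Z : 1 <= r (x |: Z) by rewrite -rx1 rS // sub1set setU11.
split.
- by rewrite setU0 rx1.
- move=> X Y sXY; have := rS _ _ (setUS [set x] sXY); have := ge1 X; lia.
- move=> X y; rewrite setUCA; have := rU1 (x |: X) y; have := ge1 X; lia.
- move=> X Y; have := rsub (x |: X) (x |: Y); rewrite -setUUr -setUIr.
  by have := ge1 X; have := ge1 Y; have := ge1 (X :|: Y); have := ge1 (X :&: Y); lia.
Qed.

Definition intersection_bound r1 r2 k D :=
  forall X, X \subset D -> k <= r1 X + r2 (D :\: X).

Lemma intersection_bound_sym r1 r2 k D :
  intersection_bound r1 r2 k D -> intersection_bound r2 r1 k D.
Proof.
move=> bnd X sXD; rewrite addnC.
by have := bnd _ (subsetDl D X); rewrite setDDr setDv set0U (setIidPr sXD).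
Qed.

Lemma intersection_bound_loop r1 r2 k D x :
  rank_function r1 -> r1 [set x] = 0 -> x \in D ->
  intersection_bound r1 r2 k D -> intersection_bound r1 r2 k (D :\ x).
Proof.
move=> r1f rx0 xD bnd X sX.
have sxX : x |: X \subset D by rewrite subUset sub1set xD (subset_trans sX) ?subD1set.
rewrite setDDl; have := bnd _ sxX.
by have := rank_setU1_loop X r1f rx0; lia.
Qed.

Lemma intersection_bound_delete_or_contract r1 r2 k D x :
  rank_function r1 -> rank_function r2 -> r1 [set x] = 1 -> r2 [set x] = 1 ->
  x \in D -> intersection_bound r1 r2 k.+1 D ->
  intersection_bound r1 r2 k.+1 (D :\ x) \/
  intersection_bound (contract r1 x) (contract r2 x) k (D :\ x).
Proof.
(* If deletion fails at X and contraction at Y, submodularity at (X, x |: Y)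
   and at the complements, together with the bound at X :&: Y and at
   x |: (X :|: Y), yields 2k + 2 <= 2k + 1. *)
move=> [_ r1S _ r1sub] [_ r2S _ r2sub] r1x r2x xD bnd.
have [del|/forallPn[X]] := boolP [forall X : {set T},
    (X \subset D :\ x) ==> (k.+1 <= r1 X + r2 ((D :\ x) :\: X))].
  by left=> X sX; apply: implyP (forallP del X) sX.
rewrite negb_imply -ltnNge => /andP[sX ltX]; right=> Y sY.
rewrite /contract leqNgt; apply/negP => ltY.
have xX : x \notin X by apply/negP => /(subsetP sX); rewrite !inE eqxx.
have eU1 : X :|: (x |: Y) = x |: (X :|: Y) by rewrite setUCA.
have eI1 : X :&: (x |: Y) = X :&: Y.
  by apply/setP=> z; rewrite !inE; have [->|] := eqVneq z x; rewrite ?(negbTE xX).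
have eU2 : ((D :\ x) :\: X) :|: (x |: ((D :\ x) :\: Y)) = D :\: (X :&: Y).
  apply/setP=> z; rewrite !inE; have [->|_] := eqVneq z x; rewrite ?xD ?(negbTE xX) //=.
  by rewrite negb_and andb_orl.
have eI2 : ((D :\ x) :\: X) :&: (x |: ((D :\ x) :\: Y)) = D :\: (x |: (X :|: Y)).
  apply/setP=> z; rewrite !inE; have [->|_] := eqVneq z x; rewrite ?(negbTE xX) //=.
  by rewrite negb_or andbACA andbb.
have sub1 := r1sub X (x |: Y); rewrite eU1 eI1 in sub1.
have sub2 := r2sub ((D :\ x) :\: X) (x |: ((D :\ x) :\: Y)); rewrite eU2 eI2 in sub2.
have sXD : X \subset D := subset_trans sX (subD1set D x).
have sYD : Y \subset D := subset_trans sY (subD1set D x).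
have bI := bnd _ (subset_trans (subsetIl X Y) sXD).
have sU : x |: (X :|: Y) \subset D by rewrite !subUset sub1set xD sXD sYD.
have bU := bnd _ sU.
have g1 : 1 <= r1 (x |: Y) by rewrite -r1x r1S // sub1set setU11.
have g2 : 1 <= r2 (x |: ((D :\ x) :\: Y)) by rewrite -r2x r2S // sub1set setU11.
lia.
Qed.

Lemma contract_independent r x W : rank_function r -> r [set x] = 1 ->
  x \notin W -> contract r x W = #|W| -> r (x |: W) = #|x |: W|.
Proof.
move=> [_ rS _ _] rx1 xW; rewrite /contract cardsU1 xW.
have : 1 <= r (x |: W) by rewrite -rx1 rS // sub1set setU11.
lia.
Qed.

Theorem matroid_intersection r1 r2 k D :
  rank_function r1 -> rank_function r2 -> intersection_bound r1 r2 k D ->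
  exists2 W : {set T}, W \subset D & [/\ k <= #|W|, r1 W = #|W| & r2 W = #|W|].
Proof.
elim: {D}#|D| {-2}D (erefl #|D|) r1 r2 k => [|m IH] D cardD r1 r2 [|k] r1f r2f bnd;
  have [r10 _ _ _] := r1f; have [r20 _ _ _] := r2f;
  try by exists set0; rewrite ?sub0set ?cards0 ?r10 ?r20.
  move/eqP: cardD; rewrite cards_eq0 => /eqP D0.
  by have := bnd set0 (sub0set _); rewrite D0 setD0 r10 r20.
have [x xD] : exists x, x \in D by apply/card_gt0P; rewrite cardD.
have cardDx : #|D :\ x| = m by move: cardD; rewrite (cardsD1 x) xD => -[].
have delete : intersection_bound r1 r2 k.+1 (D :\ x) ->
    exists2 W : {set T}, W \subset D & [/\ k.+1 <= #|W|, r1 W = #|W| & r2 W = #|W|].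
  move=> /(IH _ cardDx _ _ _ r1f r2f) [W sW WP].
  by exists W => //; apply: subset_trans sW (subD1set D x).
have [r1x0|r1x] := eqVneq (r1 [set x]) 0.
  exact/delete/(intersection_bound_loop r1f r1x0 xD).
have [r2x0|r2x] := eqVneq (r2 [set x]) 0.
  apply/delete/intersection_bound_sym.
  exact/(intersection_bound_loop r2f r2x0 xD)/intersection_bound_sym.
have {r1x}r1x : r1 [set x] = 1 by have := rank_set1_le1 x r1f; lia.
have {r2x}r2x : r2 [set x] = 1 by have := rank_set1_le1 x r2f; lia.
have [/delete //|bndc] := intersection_bound_delete_or_contract r1f r2f r1x r2x xD bnd.
have [W sW [kW r1W r2W]] := IH _ cardDx _ _ _
  (rank_function_contract r1f r1x) (rank_function_contract r2f r2x) bndc.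
have xW : x \notin W by apply/negP => /(subsetP sW); rewrite !inE eqxx.
exists (x |: W); first by rewrite subUset sub1set xD (subset_trans sW) ?subD1set.
by rewrite !contract_independent // cardsU1 xW.
Qed.
End MatroidIntersection.

Local Open Scope ring_scope.

(** * Ranks of submatrices *)

Section MaskedRank.
Variables (F : fieldType) (T : finType).
Local Notation N := #|{: T}|.
Implicit Types A B C R X Y : {set T}.

Definition mask_mx A : 'M[F]_N := diag_mx (\row_i (enum_val i \in A)%:R).

Lemma mask_mxE A i j : mask_mx A i j = ((i == j) && (enum_val i \in A))%:R.
Proof. by rewrite !mxE; case: eqP => [->|]; rewrite ?mulr1n ?mulr0n. Qed.

Lemma mulmx_mask_mxE m (M : 'M[F]_(m, N)) A i j :
  (M *m mask_mx A) i j = M i j * (enum_val j \in A)%:R.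
Proof. by rewrite mul_mx_diag !mxE. Qed.

Lemma mask_mxM A B : mask_mx A *m mask_mx B = mask_mx (A :&: B).
Proof.
apply/matrixP => i j; rewrite mul_diag_mx !mask_mxE !mxE inE.
by case: (i == j); case: (_ \in A); case: (_ \in B); rewrite ?mul1r ?mul0r.
Qed.

Lemma mask_mx0 : mask_mx set0 = 0.
Proof. by apply/matrixP => i j; rewrite mask_mxE inE andbF mxE. Qed.

Lemma mask_mxT : mask_mx setT = 1%:M.
Proof. by apply/matrixP => i j; rewrite mask_mxE inE andbT mxE. Qed.

Lemma mask_mxU A B :
  [disjoint A & B] -> mask_mx (A :|: B) = mask_mx A + mask_mx B.
Proof.
move=> dAB; apply/matrixP => i j; rewrite [RHS]mxE !mask_mxE inE.
case: (i == j); rewrite ?addr0 //=.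
by case Ai: (_ \in A); rewrite ?add0r ?(disjointFr dAB Ai) ?addr0.
Qed.

Lemma mask_mxC A : mask_mx A + mask_mx (~: A) = 1%:M.
Proof. by rewrite -mask_mxU ?setUCr ?mask_mxT // disjoints_subset setCK. Qed.

Lemma mulmx_mask_submx m (M : 'M[F]_(N, m)) A B :
  A \subset B -> (mask_mx A *m M <= mask_mx B *m M)%MS.
Proof. by move=> sAB; rewrite -(setIidPl sAB) -mask_mxM -mulmxA submxMl. Qed.

Lemma mask_submx A B : A \subset B -> (mask_mx A <= mask_mx B)%MS.
Proof. by move=> /(mulmx_mask_submx 1%:M); rewrite !mulmx1. Qed.

Lemma mulmx_mask_setU_submx m (M : 'M[F]_(N, m)) A B :
  (mask_mx (A :|: B) *m M <= mask_mx A *m M + mask_mx B *m M)%MS.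
Proof.
have dAB : [disjoint A & B :\: A] by rewrite disjoint_sym disjoints_subset subsetDr.
have -> : A :|: B = A :|: (B :\: A) by rewrite setDE setUIr setUCr setIT.
rewrite mask_mxU // mulmxDl addmx_sub_adds //.
exact/mulmx_mask_submx/subsetDl.
Qed.

Lemma mxrank_adds_disjoint_support m1 m2 (M1 : 'M[F]_(m1, N)) (M2 : 'M[F]_(m2, N))
    A B :
  [disjoint A & B] -> M1 *m mask_mx A = M1 -> M2 *m mask_mx B = M2 ->
  \rank (M1 + M2)%MS = (\rank M1 + \rank M2)%N.
Proof.
move=> dAB M1A M2B; apply: mxrank_disjoint_sum.
have [K1 eK1] := submxP (capmxSl M1 M2); have [K2 eK2] := submxP (capmxSr M1 M2).
set Z := (M1 :&: M2)%MS in eK1 eK2 *.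
have ZA : Z *m mask_mx A = Z by rewrite eK1 -mulmxA M1A.
have ZB : Z *m mask_mx B = Z by rewrite eK2 -mulmxA M2B.
by rewrite -ZA -ZB -mulmxA mask_mxM setIC (disjoint_setI0 dAB) mask_mx0 mulmx0.
Qed.

Lemma mask_mx1 x : mask_mx [set x] = delta_mx (enum_rank x) (enum_rank x).
Proof.
apply/matrixP => i j; rewrite mask_mxE !mxE inE.
rewrite -[enum_val i == x](inj_eq (@enum_rank_inj T)) enum_valK.
by have [->|_] := eqVneq i (enum_rank x); rewrite ?andbT ?andbF //= eq_sym.
Qed.

Lemma mxrank_mask_mxU A B : [disjoint A & B] ->
  \rank (mask_mx (A :|: B)) = (\rank (mask_mx A) + \rank (mask_mx B))%N.
Proof.
move=> dAB; rewrite -(mxrank_adds_disjoint_support dAB) ?mask_mxM ?setIid //.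
apply/eqmx_rank/andP; split; last by rewrite addsmx_sub !mask_submx ?subsetUl ?subsetUr.
by have := mulmx_mask_setU_submx 1%:M A B; rewrite !mulmx1.
Qed.

Lemma mxrank_mask_mx A : \rank (mask_mx A) = #|A|.
Proof.
elim: {A}#|A| {-2}A (erefl #|A|) => [|k IH] A cardA.
  by move/eqP: cardA; rewrite cards_eq0 => /eqP->; rewrite mask_mx0 mxrank0 cards0.
have [x xA] : exists x, x \in A by apply/card_gt0P; rewrite cardA.
have cardAx : #|A :\ x| = k by move: cardA; rewrite (cardsD1 x) xA => -[].
have dxA : [disjoint [set x] & A :\ x] by rewrite disjoints1 !inE eqxx.
by rewrite -{1}(setD1K xA) mxrank_mask_mxU // mask_mx1 mxrank_delta IH // cardAx cardA.
Qed.

Variable E : 'M[F]_N.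

Definition restrict_mx R C := mask_mx R *m E *m mask_mx C.
Definition restricted_rank R C := \rank (restrict_mx R C).

Lemma restricted_rank_tr R C :
  restricted_rank R C = \rank (mask_mx C *m E^T *m mask_mx R).
Proof.
by rewrite /restricted_rank -mxrank_tr !trmx_mul /mask_mx !tr_diag_mx mulmxA.
Qed.

Definition compl_span X Y := (mask_mx (~: X) + mask_mx Y *m E^T)%MS.

Lemma mxrank_compl_span X Y :
  \rank (compl_span X Y) = (#|~: X| + restricted_rank X Y)%N.
Proof.
rewrite /compl_span; set M := mask_mx Y *m E^T.
have eM : M = M *m mask_mx X + M *m mask_mx (~: X) by rewrite -mulmxDr mask_mxC mulmx1.
have MC_sub : (M *m mask_mx (~: X) <= mask_mx (~: X))%MS by apply: submxMl.
have eqS : (mask_mx (~: X) + M == mask_mx (~: X) + M *m mask_mx X)%MS.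
  apply/andP; split; rewrite addsmx_sub addsmxSl /=.
    by rewrite {1}eM addrC addmx_sub_adds.
  have -> : M *m mask_mx X = M - M *m mask_mx (~: X) by rewrite {2}eM addrK.
  by rewrite addmx_sub ?addsmxSr // eqmx_opp (submx_trans MC_sub) ?addsmxSl.
have dX : [disjoint ~: X & X] by rewrite disjoints_subset.
rewrite (eqmx_rank eqS) (mxrank_adds_disjoint_support dX) ?mask_mxM ?setIid //.
  by rewrite mxrank_mask_mx restricted_rank_tr.
by rewrite -mulmxA mask_mxM setIid.
Qed.

(* [compl_span] is monotone in [Y] and antitone in [X], so this is the modular
   law for row spaces, shifted by [mxrank_compl_span]. *)
Lemma restricted_rank_submod R1 R2 C1 C2 :
  (restricted_rank (R1 :&: R2) (C1 :|: C2) + restricted_rank (R1 :|: R2) (C1 :&: C2)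
   <= restricted_rank R1 C1 + restricted_rank R2 C2)%N.
Proof.
have sub_sum : (compl_span (R1 :&: R2) (C1 :|: C2)
    <= compl_span R1 C1 + compl_span R2 C2)%MS.
  rewrite addsmx_sub; apply/andP; split.
    have := mulmx_mask_setU_submx 1%:M (~: R1) (~: R2); rewrite !mulmx1 -setCI => sU.
    by apply: submx_trans sU _; apply: addsmxS; apply: addsmxSl.
  by apply: submx_trans (mulmx_mask_setU_submx _ _ _) _; apply: addsmxS; apply: addsmxSr.
have sub_cap : (compl_span (R1 :|: R2) (C1 :&: C2)
    <= compl_span R1 C1 :&: compl_span R2 C2)%MS.
  rewrite sub_capmx; apply/andP; split; apply: addsmxS;
  by [apply: mask_submx; rewrite setCS (subsetUl, subsetUr)
     |apply: mulmx_mask_submx; rewrite (subsetIl, subsetIr)].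
have := leq_add (mxrankS sub_sum) (mxrankS sub_cap).
rewrite mxrank_sum_cap !mxrank_compl_span.
have : (#|~: (R1 :&: R2)| + #|~: (R1 :|: R2)| = #|~: R1| + #|~: R2|)%N.
  by rewrite setCI setCU cardsUI.
lia.
Qed.

Lemma restricted_rankSr R C C' :
  C \subset C' -> (restricted_rank R C <= restricted_rank R C')%N.
Proof.
by move=> sC; rewrite /restricted_rank /restrict_mx -(setIidPr sC) -mask_mxM mulmxA mxrankM_maxl.
Qed.

Lemma restricted_rank_leq_rows R C : (restricted_rank R C <= #|R|)%N.
Proof. by rewrite -mxrank_mask_mx /restricted_rank /restrict_mx -mulmxA mxrankM_maxl. Qed.

Lemma restricted_rank_leq_cols R C : (restricted_rank R C <= #|C|)%N.
Proof. by rewrite -mxrank_mask_mx /restricted_rank /restrict_mx mxrankM_maxr. Qed.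

Lemma rank_function_restricted_rank R : rank_function (restricted_rank R).
Proof.
have submod C1 C2 := restricted_rank_submod R R C1 C2; rewrite !setIid !setUid in submod.
split=> // [|C C'|C x].
- by apply/eqP; rewrite -leqn0 -(cards0 T) restricted_rank_leq_cols.
- exact: restricted_rankSr.
have := submod C [set x]; have := restricted_rank_leq_cols R [set x].
by rewrite cards1 setUC; lia.
Qed.
End MaskedRank.
Arguments mask_mx {F T} A.


Lemma card_setI_submod (T : finType) (A B X Y : {set T}) :
  (#|(X :|: Y) :&: (A :&: B)| + #|(X :&: Y) :&: (A :|: B)| <= #|X :&: A| + #|Y :&: B|)%N.
Proof.
set U := (X :|: Y) :&: _; set I := (X :&: Y) :&: _.
have sUI : U :|: I \subset (X :&: A) :|: (Y :&: B).
  by apply/subsetP => z /[!inE]; case: (z \in X); case: (z \in Y); case: (z \in A); case: (z \in B).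
have sIU : U :&: I \subset (X :&: A) :&: (Y :&: B).
  by apply/subsetP => z /[!inE]; case: (z \in X); case: (z \in Y); case: (z \in A); case: (z \in B).
by rewrite -cardsUI -[X in (_ <= X)%N]cardsUI leq_add ?subset_leq_card.
Qed.

Lemma rows_submx (F : fieldType) m1 m2 k (A : 'M[F]_(m1, k)) (B : 'M[F]_(m2, k)) :
  (forall i, row i A = 0 \/ exists j, row i A = row j B) -> (A <= B)%MS.
Proof.
by move=> rowA; apply/row_subP => i; case: (rowA i) => [->|[j ->]]; rewrite ?sub0mx ?row_sub.
Qed.

Lemma rows_submx_adds (F : fieldType) m1 m2 m3 k (A : 'M[F]_(m1, k))
    (B : 'M[F]_(m2, k)) (C : 'M[F]_(m3, k)) :
  (forall i, row i A = 0 \/ (exists j, row i A = row j B) \/ exists j, row i A = row j C) ->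
  (A <= B + C)%MS.
Proof.
move=> rowA; apply/row_subP => i.
case: (rowA i) => [->|[[j ->]|[j ->]]]; first exact: sub0mx.
  exact: submx_trans (row_sub _ _) (addsmxSl _ _).
exact: submx_trans (row_sub _ _) (addsmxSr _ _).
Qed.

(** * Cuts of the layered network *)

Section MinCut.
Variables (F : fieldType) (V Po Pi : finType) (oo : Po -> V) (oi : Pi -> V)
  (e : Po -> Pi -> bool) (s t : V).

Lemma mincut_le_cut_rank (Om : {set V}) : s \in Om -> t \notin Om ->
  (mincut F oo oi e s t <= cut_rank F oo oi e Om)%N.
Proof. by move=> sOm tOm; rewrite /mincut -minEnat -leEnat bigmin_le_cond // sOm. Qed.

Lemma mincut_ge k : (k <= #|{: Pi}|)%N ->
  (forall Om : {set V}, s \in Om -> t \notin Om -> k <= cut_rank F oo oi e Om)%N ->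
  (k <= mincut F oo oi e s t)%N.
Proof.
move=> kPi kcut; rewrite /mincut -minEnat -leEnat le_bigmin // => Om /andP[].
exact: kcut.
Qed.
End MinCut.
Arguments mincut_le_cut_rank {F V Po Pi oo oi e s t Om}.

Section Network.
Variables (F : fieldType) (V : finType) (n : nat) (layer : V -> nat)
  (edge : V * 'I_n -> V * 'I_n -> bool) (S : V) (l : nat).
Hypothesis edge_layer : forall p q, edge p q -> layer q.1 = (layer p.1).+1.

Local Notation N := #|{: V * 'I_n}|.
Implicit Types (Om : {set V}) (X Y : {set V * 'I_n}) (W : {set port V n}).

Definition edge_mx : 'M[F]_N := \matrix_(i, j) (edge (enum_val j) (enum_val i))%:R.

Lemma restrict_edge_mxE R C i j : restrict_mx edge_mx R C i j =
  if [&& enum_val i \in R, enum_val j \in C & edge (enum_val j) (enum_val i)] then 1 else 0.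
Proof.
rewrite /restrict_mx /mask_mx mul_mx_diag mul_diag_mx !mxE.
by case: (_ \in R); case: (_ \in C); case: edge; rewrite ?mulr1 ?mul1r ?mulr0 ?mul0r.
Qed.

Definition cut_in Om := [set q : V * 'I_n | (layer q.1 <= l)%N && (q.1 \notin Om)].
Definition cut_out Om := [set p : V * 'I_n | p.1 \in Om].
Definition trunc_cut_rank Om := restricted_rank edge_mx (cut_in Om) (cut_out Om).

Definition sink_cut X Om := (trunc_cut_rank Om + #|X :&: cut_out Om|)%N.

(* The min-cut from [S] to a virtual sink fed directly by the output ports in
   [X], in the network truncated after layer [l]. *)
Definition sink_rank X := sink_cut X [arg min_(Om < setT | S \in Om) sink_cut X Om].

Lemma cut_outU Om1 Om2 : cut_out (Om1 :|: Om2) = cut_out Om1 :|: cut_out Om2.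
Proof. by apply/setP => p; rewrite !inE. Qed.

Lemma cut_outI Om1 Om2 : cut_out (Om1 :&: Om2) = cut_out Om1 :&: cut_out Om2.
Proof. by apply/setP => p; rewrite !inE. Qed.

Lemma trunc_cut_rank_setT : trunc_cut_rank setT = 0%N.
Proof.
apply/eqP; rewrite -leqn0 -(cards0 (V * 'I_n)%type).
rewrite (leq_trans (restricted_rank_leq_rows _ _ _)) //.
by apply/subset_leq_card/subsetP => q; rewrite !inE andbF.
Qed.

Lemma trunc_cut_rank_submod Om1 Om2 :
  (trunc_cut_rank (Om1 :|: Om2) + trunc_cut_rank (Om1 :&: Om2)
   <= trunc_cut_rank Om1 + trunc_cut_rank Om2)%N.
Proof.
have inU : cut_in (Om1 :|: Om2) = cut_in Om1 :&: cut_in Om2.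
  by apply/setP => q; rewrite !inE negb_or andbACA andbb.
have inI : cut_in (Om1 :&: Om2) = cut_in Om1 :|: cut_in Om2.
  by apply/setP => q; rewrite !inE negb_and andb_orr.
by rewrite /trunc_cut_rank inU inI cut_outU cut_outI restricted_rank_submod.
Qed.

Lemma sink_rank_le X Om : S \in Om -> (sink_rank X <= sink_cut X Om)%N.
Proof. by rewrite /sink_rank; case: arg_minnP => [|Om' _]; [apply: in_setT | apply]. Qed.

Lemma sink_rankP X : exists2 Om : {set V}, S \in Om & sink_rank X = sink_cut X Om.
Proof. by rewrite /sink_rank; case: arg_minnP => [|Om SOm _]; [apply: in_setT | exists Om]. Qed.

Lemma rank_function_sink_rank : rank_function sink_rank.
Proof.
split.
- apply/eqP; rewrite -leqn0 (leq_trans (sink_rank_le _ (in_setT S))) //.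
  by rewrite /sink_cut trunc_cut_rank_setT set0I cards0.
- move=> X Y sXY; have [Om SOm ->] := sink_rankP Y.
  by rewrite (leq_trans (sink_rank_le X SOm)) // leq_add2l subset_leq_card ?setSI.
- move=> X x; have [Om SOm ->] := sink_rankP X.
  rewrite (leq_trans (sink_rank_le _ SOm)) // -addnS leq_add2l setIUl.
  rewrite (leq_trans (leq_card_setU _ _)) // -addn1 addnC leq_add2l.
  by rewrite -(cards1 x) subset_leq_card ?subsetIl.
- move=> X Y; have [O1 SO1 ->] := sink_rankP X; have [O2 SO2 ->] := sink_rankP Y.
  have SOI : S \in O1 :&: O2 by rewrite inE SO1.
  have SOU : S \in O1 :|: O2 by rewrite inE SO1.
  have := leq_add (sink_rank_le (X :|: Y) SOI) (sink_rank_le (X :&: Y) SOU).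
  rewrite /sink_cut cut_outU cut_outI => /leq_trans; apply.
  rewrite addnACA [leqRHS]addnACA leq_add ?card_setI_submod //.
  by rewrite addnC trunc_cut_rank_submod.
Qed.

Definition in_ports W := [set q : V * 'I_n | inr q \in W].
Definition layer_outs := [set p : V * 'I_n | layer p.1 == l].
Definition layer_outs_in Om := [set p : V * 'I_n | (layer p.1 == l) && (p.1 \in Om)].

Lemma restrict_edge_mx_below_layer Om :
  restrict_mx edge_mx (cut_in Om) (cut_out Om) *m mask_mx [set p | (layer p.1 < l)%N]
  = restrict_mx edge_mx (cut_in Om) (cut_out Om).
Proof.
apply/matrixP => i j; rewrite mulmx_mask_mxE !restrict_edge_mxE !inE.
case: (ltnP (layer (enum_val j).1) l) => [|ge_l]; first by rewrite mulr1.
case e: edge; rewrite ?andbF ?mul0r //.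
by rewrite (edge_layer e) leqNgt ltnS ge_l /= mul0r.
Qed.

Section SinkW'.
Variable W' : {set port V n}.
Hypothesis W'_in : forall w, w \in W' -> is_in w /\ layer (port_owner w) = l.+1.

Lemma card_in_ports : #|in_ports W'| = #|W'|.
Proof.
have eW' : W' = inr @: in_ports W'.
  apply/setP => w; apply/idP/imsetP => [Ww|[q /[!inE] Wq ->] //].
  by have [] := W'_in Ww; case: w Ww => // q Wq _ _; exists q; rewrite ?inE.
by rewrite [in RHS]eW' card_imset // => ? ? [].
Qed.

Definition W'_node v := [exists j, inr (v, j) \in W'].

Lemma W'_node_layer v : W'_node v -> layer v = l.+1.
Proof. by case/existsP => j /W'_in[]. Qed.

Lemma W'_nodeP q : inr q \in W' -> W'_node q.1.
Proof. by move=> Wq; apply/existsP; exists q.2; rewrite -surjective_pairing. Qed.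

Definition extend_cut Om : {set option V} := [set o | if o is Some v then
  (if layer v <= l then v \in Om else ~~ W'_node v)%N else false].

Lemma extend_cut_low Om q p : (layer q.1 <= l)%N ->
  [&& Some p.1 \in extend_cut Om, Some q.1 \notin extend_cut Om
    & aug_edge edge p (inl q : aug_in W')]
  = [&& q \in cut_in Om, p \in cut_out Om & edge p q].
Proof.
move=> ql; have notW' : W'_node q.1 = false.
  by apply/negbTE/negP => /W'_node_layer; lia.
rewrite /= /disconnected -/(W'_node _) notW' !inE ql andbT /=.
case e: edge; rewrite ?andbF //; have := edge_layer e.
by case: leqP; rewrite ?andbT //; lia.
Qed.

Lemma extend_cut_high Om q p : (l < layer q.1)%N ->
  [&& Some p.1 \in extend_cut Om, Some q.1 \notin extend_cut Om
    & aug_edge edge p (inl q : aug_in W')]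
  = [&& q \in in_ports W', p \in layer_outs_in Om & edge p q].
Proof.
move=> lq; rewrite /= /disconnected -/(W'_node _) !inE (leqNgt (layer q.1)) lq /= negbK.
case Wq: (inr q \in W'); last by case: (W'_node q.1); rewrite /= ?andbF ?andbT.
rewrite (W'_nodeP Wq) /= andbT; case e: edge; rewrite ?andbF // !andbT.
have := edge_layer e; rewrite (W'_node_layer (W'_nodeP Wq)) => -[->].
by rewrite leqnn eqxx.
Qed.

Lemma extend_cut_sink Om (w : {w | w \in W'}) p :
  [&& Some p.1 \in extend_cut Om, None \notin extend_cut Om
    & aug_edge edge p (inr w : aug_in W')] = false.
Proof.
case: w => [w Ww]; have [] := W'_in Ww; case: w Ww => // q Wq _ /= lq.
case: eqP; rewrite ?andbF // => ->; rewrite !inE lq ltnn W'_nodeP //.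
Qed.

Lemma sink_mincut_le_extend_cut Om : S \in Om -> layer S = 1%N -> (0 < l)%N ->
  (sink_mincut F edge W' S
   <= trunc_cut_rank Om + restricted_rank edge_mx (in_ports W') (layer_outs_in Om))%N.
Proof.
move=> SOm lS l_gt0; have cutS : Some S \in extend_cut Om by rewrite inE lS l_gt0.
have cutT : None \notin extend_cut Om by rewrite inE.
rewrite /sink_mincut; apply: leq_trans (mincut_le_cut_rank cutS cutT) _.
apply: leq_trans (mxrankS (rows_submx_adds _)) (mxrank_adds_leqif _ _) => i.
case e: (enum_val i) => [q|w]; last first.
  by left; apply/rowP => j; rewrite !mxE e extend_cut_sink.
right; case: (leqP (layer q.1) l) => lq; [left|right]; exists (enum_rank q);
  apply/rowP => j; rewrite mxE [RHS]mxE restrict_edge_mxE mxE e enum_rankK.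
  by rewrite /aug_owner_out /aug_owner_in extend_cut_low.
by rewrite /aug_owner_out /aug_owner_in extend_cut_high.
Qed.

Lemma intersection_bound_regular : layer S = 1%N -> (0 < l)%N ->
  intersection_bound sink_rank (restricted_rank edge_mx (in_ports W'))
    (sink_mincut F edge W' S) layer_outs.
Proof.
move=> lS l_gt0 X sX; have [Om SOm ->] := sink_rankP X.
have [_ rS _ rsub] := rank_function_restricted_rank edge_mx (in_ports W').
have sLO : layer_outs_in Om \subset (X :&: cut_out Om) :|: (layer_outs :\: X).
  by apply/subsetP => p; rewrite !inE => /andP[-> ->]; case: (p \in X).
apply: leq_trans (sink_mincut_le_extend_cut SOm lS l_gt0) _.
rewrite /sink_cut -addnA leq_add2l (leq_trans (rS _ _ sLO)) //.
rewrite (leq_trans (leq_trans (leq_addr _ _) (rsub _ _))) //.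
by rewrite leq_add2r restricted_rank_leq_cols.
Qed.
End SinkW'.

Section OutputSink.
Variable Wp : {set V * 'I_n}.
Hypothesis Wp_layer : Wp \subset layer_outs.
Local Notation W := (inl @: Wp : {set port V n}).

Lemma aug_edge_inl p q : aug_edge edge p (inl q : aug_in W) = edge p q.
Proof.
rewrite /= /disconnected; case: existsP => [[j /imsetP[? _ //]]|_].
by rewrite andbT.
Qed.

Lemma sink_cut_le_cut_rank (Oa : {set option V}) : None \notin Oa ->
  (sink_cut Wp [set v | Some v \in Oa]
   <= cut_rank F (@aug_owner_out V n) (@aug_owner_in V n W) (@aug_edge V n edge W) Oa)%N.
Proof.
(* The rows of the truncated cut meet only columns below layer l, those of
   [mask_mx Z] only columns of layer l, so their ranks add up. *)
move=> NOa; set Om0 := [set v | Some v \in Oa]; set Z := Wp :&: cut_out Om0.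
have dj : [disjoint [set p | (layer p.1 < l)%N] & layer_outs].
  by rewrite disjoints_subset; apply/subsetP => p /[!inE]; rewrite ltn_neqAle => /andP[].
have ZL : mask_mx Z *m mask_mx layer_outs = mask_mx Z :> 'M[F]_N.
  by rewrite mask_mxM (setIidPl (subset_trans (subsetIl _ _) Wp_layer)).
rewrite /sink_cut -(mxrank_mask_mx F Z).
rewrite -(mxrank_adds_disjoint_support dj (restrict_edge_mx_below_layer Om0) ZL).
apply: mxrankS; rewrite addsmx_sub; apply/andP; split; apply: rows_submx => k.
  case qin: (enum_val k \in cut_in Om0); [right|left]; last first.
    by apply/rowP => j; rewrite mxE restrict_edge_mxE qin mxE.
  exists (enum_rank (inl (enum_val k) : aug_in W)).
  apply/rowP => j.
  rewrite mxE [RHS]mxE restrict_edge_mxE mxE enum_rankK aug_edge_inl qin.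
  by move: qin; rewrite !inE /= => /andP[_ ->].
case pZ: (enum_val k \in Z); [right|left]; last first.
  by apply/rowP => j; rewrite mxE mask_mxE pZ andbF mxE.
have pW : inl (enum_val k) \in W by apply: imset_f; case/setIP: pZ.
exists (enum_rank (inr (exist (fun w => w \in W) _ pW) : aug_in W)).
apply/rowP => j; rewrite mxE [RHS]mxE mask_mxE mxE enum_rankK pZ andbT /= NOa.
rewrite -(inj_eq (@enum_val_inj _ _)) eq_sym; case: eqP => [->|]; rewrite ?andbF //.
by case/setIP: pZ => _; rewrite !inE => ->.
Qed.

Lemma sink_mincut_le_card : (sink_mincut F edge W S <= #|Wp|)%N.
Proof.
pose Oa : {set option V} := [set o | o != None].
have SOa : Some S \in Oa by rewrite inE.
have NOa : None \notin Oa by rewrite inE.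
apply: leq_trans (mincut_le_cut_rank SOa NOa) _.
rewrite /cut_rank -(mxrank_mask_mx F Wp); apply/mxrankS/rows_submx => i.
case e: (enum_val i) => [q|[w Ww]]; [left|right].
  by apply/rowP => j; rewrite !mxE e !inE.
have [p Wpp ew] := imsetP Ww; exists (enum_rank p).
apply/rowP => j.
rewrite mxE [RHS]mxE mask_mxE mxE e enum_rankK Wpp andbT /= ew !inE /=.
by rewrite -[enum_rank p == j](inj_eq (@enum_val_inj _ _)) enum_rankK eq_sym; case: eqP.
Qed.

Lemma restricted_rank_le_GWW (W' : {set port V n}) :
  (restricted_rank edge_mx (in_ports W') Wp <= \rank (GWW F edge W W'))%N.
Proof.
pose Y : 'M[F]_(#|W'|, N) := \matrix_(a, j)
  (if (enum_val j \in Wp) && pedge edge (inl (enum_val j)) (enum_val a) then 1 else 0).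
have restr_Y : (restrict_mx edge_mx (in_ports W') Wp <= Y)%MS.
  apply: rows_submx => k; case qW: (enum_val k \in in_ports W'); [right|left]; last first.
    by apply/rowP => j; rewrite mxE restrict_edge_mxE qW mxE.
  have Wq : inr (enum_val k) \in W' by rewrite inE in qW.
  exists (enum_rank_in Wq (inr (enum_val k))).
  by apply/rowP => j; rewrite mxE [RHS]mxE restrict_edge_mxE mxE enum_rankK_in // qW.
have Y_GWW : (Y^T <= (GWW F edge W W')^T)%MS.
  apply: rows_submx => j; case pW: (enum_val j \in Wp); [right|left]; last first.
    by apply/rowP => a; rewrite !mxE pW.
  have Wp' : inl (enum_val j) \in W by apply: imset_f.
  exists (enum_rank_in Wp' (inl (enum_val j))).
  by apply/rowP => a; rewrite !mxE enum_rankK_in // pW.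
rewrite /restricted_rank (leq_trans (mxrankS restr_Y)) //.
by rewrite -mxrank_tr -[leqRHS]mxrank_tr mxrankS.
Qed.
Lemma regular_inl R : sink_rank Wp = #|Wp| -> #|Wp| = R -> regular F layer edge S R W.
Proof.
move=> indepWp cardWp; have inj_inl : injective (@inl (V * 'I_n) (V * 'I_n)) by move=> ? ? [].
split; first split.
- by rewrite card_imset.
- by exists l => _ /imsetP[p /(subsetP Wp_layer) /[!inE] /eqP lp ->].
- by move=> v [_ [j /imsetP[]]].
apply/eqP; rewrite eqn_leq -{1}cardWp sink_mincut_le_card /=.
apply: mincut_ge => [|Oa SOa NOa].
  by rewrite card_sum card_sig card_imset // cardWp leq_addl.
have SOm : S \in [set v | Some v \in Oa] by rewrite inE.
by rewrite -cardWp -indepWp (leq_trans (sink_rank_le _ SOm)) ?sink_cut_le_cut_rank.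
Qed.
End OutputSink.
End Network.

Local Close Scope ring_scope.

Theorem lemma5 (F : finFieldType) (V : finType) (n : nat)
  (layer : V -> nat) (lam : nat)
  (edge : V * 'I_n -> V * 'I_n -> bool) (S : V) (Tset : {set V})
  (Hlayers : forall v : V, (1 <= layer v <= lam)%N)
  (Hedge : forall p q, edge p q -> layer q.1 = (layer p.1).+1)
  (HS : layer S = 1%N)
  (HT0 : Tset != set0) (HST : S \notin Tset)
  (l : nat) (Hl : (1 <= l <= lam - 1)%N)
  (W' : {set port V n})
  (HW'in : forall w, w \in W' -> is_in w /\ layer (port_owner w) = l.+1)
  (HW'reg : regular F layer edge S (net_R F edge S Tset) W') :
  exists W : {set port V n},
    [/\ forall w, w \in W -> is_out w /\ layer (port_owner w) = l,
        regular F layer edge S (net_R F edge S Tset) W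
      & \rank (GWW F edge W W') = net_R F edge S Tset].
Proof.
set R := net_R F edge S Tset in HW'reg *; case: HW'reg => [[cardW' _ _] regW'].
have l_gt0 : 0 < l by case/andP: Hl.
have := intersection_bound_regular F Hedge HW'in HS l_gt0; rewrite regW' => bnd.
have [Wp sWp [RWp indepWp linkWp]] := matroid_intersection
  (rank_function_sink_rank F layer edge S l) (rank_function_restricted_rank _ _) bnd.
have cardWp : #|Wp| = R.
  apply/eqP; rewrite eqn_leq RWp andbT -cardW' -(card_in_ports HW'in) -linkWp.
  exact: restricted_rank_leq_rows.
exists (inl @: Wp); split.
- by move=> _ /imsetP[p /(subsetP sWp) /[!inE] /eqP lp ->]; split.
- exact: (regular_inl Hedge sWp).
- apply/eqP; rewrite eqn_leq -{1}cardW' rank_leq_row -{1}cardWp -linkWp.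
  exact: restricted_rank_le_GWW.
Qed.
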